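(* Let $N$ be a nested set of separations of a connected locally finite graph $G$, let $((A_i,B_i))_{i\in\mathbb N}$ be a strictly increasing sequence of orientations of separations in $N$ whose underlying separations are tight, and let $(A,B)=(\bigcup_iA_i,\bigcap_iB_i)$. If the sequence is non-exhaustive (i.e. $B\ne\emptyset$) and $N$ distinguishes all pre-tangles in $G$ induced by ends of $G$ lying in the closure of $A\cap B$, then exactly one end of $G$ lies in the closure of $A\cap B$.
   Context: A separation of $G$ is an unordered pair $\{A,B\}$ of subsets of $V(G)$ with $A\cup B=V(G)$ and no edge between $A\setminus B$ and $B\setminus A$; order $|A\cap B|$. Oriented separations are ordered by $(A,B)\le(C,D)$ iff $A\subseteq C$ and $B\supseteq D$; nested means some orientations are comparable. For $X\subseteq V(G)$, a component $K$ of $G-X$ is tight if $N_G(K)=X$; a separation $\{A,B\}$ is tight if both $A\setminus B$ and $B\setminus A$ contain the vertex set of a tight component of $G-(A\cap B)$. A pre-tangle is a consistent set $P$ of oriented separations (no $(A,B),(C,D)\in P$ with $\{A,B\}\ne\{C,D\}$ and $(B,A)\le(C,D)$) containing, for some $k\in\mathbb N\cup\{\aleph_0\}$, exactly one orientation of every separation of order $<k$ and nothing else. A separation distinguishes two pre-tangles if both orient it, differently; $N$ distinguishes a set of pre-tangles if any two of them distinguished by some separation are distinguished by an element of $N$. An end is an equivalence class of rays; the pre-tangle $P_\omega$ induced by an end $\omega$ contains, for every finite-order separation $\{A,B\}$, the orientation $(A,B)$ such that rays of $\omega$ have cofinitely many vertices in $B\setminus A$. A comb is a ray (spine) together with infinitely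 many disjoint finite paths meeting it exactly in their first vertex; their last vertices are the teeth. An end $\omega$ lies in the closure of $U\subseteq V(G)$ if there is a comb with teeth in $U$ whose spine is in $\omega$. *)

From Stdlib Require Import List Arith.
Import ListNotations.

Section Graphs.
Variable V : Type.
Variable adj : V -> V -> Prop.

Definition seteq (X Y : V -> Prop) : Prop := forall v, X v <-> Y v.

Definition finite_set (X : V -> Prop) : Prop :=
  exists l : list V, forall v, X v -> In v l.

Definition locally_finite : Prop :=
  forall v, finite_set (adj v).

Inductive walk_in (S : V -> Prop) : V -> V -> Prop :=
| walk_refl : forall v, S v -> walk_in S v v
| walk_step : forall u w v, S u -> adj u w -> walk_in S w v -> walk_in S u v.

Definition connected_graph : Prop :=
  forall u v, walk_in (fun _ => True) u v.

Fixpoint adj_chain (p : list V) : Prop :=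
  match p with
  | x :: ((y :: _) as t) => adj x y /\ adj_chain t
  | _ => True
  end.

Definition is_path (p : list V) : Prop :=
  p <> [] /\ NoDup p /\ adj_chain p.

Definition is_ray (r : nat -> V) : Prop :=
  (forall n m, r n = r m -> n = m) /\ (forall n, adj (r n) (r (S n))).

(** Two rays are equivalent (lie in the same end) if for every finite
    vertex set X they have tails in the same component of G - X. *)
Definition ray_equiv (r1 r2 : nat -> V) : Prop :=
  forall X : V -> Prop, finite_set X ->
    exists n0 m0,
      (forall n, n0 <= n -> ~ X (r1 n)) /\
      (forall m, m0 <= m -> ~ X (r2 m)) /\
      walk_in (fun v => ~ X v) (r1 n0) (r2 m0).

(** The ray s is the spine of a comb whose teeth lie in U. *)
Definition comb_with_teeth_in (s : nat -> V) (U : V -> Prop) : Prop :=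
  exists P : nat -> list V,
    (forall i, is_path (P i)) /\
    (forall i j x, i <> j -> In x (P i) -> ~ In x (P j)) /\
    (forall i, exists k rest, P i = s k :: rest /\
                 forall y, In y rest -> forall m, y <> s m) /\
    (forall i, U (last (P i) (s 0))).

Definition end_in_closure (r : nat -> V) (U : V -> Prop) : Prop :=
  exists s, is_ray s /\ ray_equiv s r /\ comb_with_teeth_in s U.

Definition is_sep (A B : V -> Prop) : Prop :=
  (forall v, A v \/ B v) /\
  (forall u v, A u -> ~ B u -> B v -> ~ A v -> ~ adj u v).

Definition finite_order (A B : V -> Prop) : Prop :=
  finite_set (fun v => A v /\ B v).

Definition sep_le (A B C D : V -> Prop) : Prop :=
  (forall v, A v -> C v) /\ (forall v, D v -> B v).

Definition sep_lt (A B C D : V -> Prop) : Prop :=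
  sep_le A B C D /\ ~ (seteq A C /\ seteq B D).

Definition same_sep (A B C D : V -> Prop) : Prop :=
  (seteq A C /\ seteq B D) \/ (seteq A D /\ seteq B C).

(** A set N of (unordered) separations is given by a predicate on
    ordered pairs; {A,B} is in N if some orientation of it is listed. *)
Definition in_sepset (N : (V -> Prop) -> (V -> Prop) -> Prop)
  (A B : V -> Prop) : Prop :=
  exists C D, N C D /\ same_sep A B C D.

Definition nested (N : (V -> Prop) -> (V -> Prop) -> Prop) : Prop :=
  forall A B C D, N A B -> N C D ->
    sep_le A B C D \/ sep_le A B D C \/ sep_le B A C D \/ sep_le B A D C.

Definition component (X K : V -> Prop) : Prop :=
  (exists v, K v) /\
  (forall v, K v -> ~ X v) /\
  (forall u v, K u -> K v -> walk_in K u v) /\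
  (forall u v, K u -> adj u v -> ~ X v -> K v).

Definition nbhd (K : V -> Prop) (v : V) : Prop :=
  ~ K v /\ exists u, K u /\ adj u v.

Definition tight_component (X K : V -> Prop) : Prop :=
  component X K /\ seteq (nbhd K) X.

Definition tight_sep (A B : V -> Prop) : Prop :=
  is_sep A B /\
  (exists K, tight_component (fun v => A v /\ B v) K /\
             forall v, K v -> A v /\ ~ B v) /\
  (exists K, tight_component (fun v => A v /\ B v) K /\
             forall v, K v -> B v /\ ~ A v).

(** (C,D) belongs to the pre-tangle P_omega induced by the end of r. *)
Definition end_orients (r : nat -> V) (C D : V -> Prop) : Prop :=
  is_sep C D /\ finite_order C D /\
  exists n0, forall n, n0 <= n -> D (r n) /\ ~ C (r n).

Definition distinguishes_ends (r1 r2 : nat -> V) (C D : V -> Prop) : Prop :=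
  end_orients r1 C D /\ end_orients r2 D C.

End Graphs.

From Stdlib Require Import List Arith Lia Classical ClassicalEpsilon Wf_nat.
Import ListNotations.

(* Write [U = (⋃ A_i) ∩ (⋂ B_i)] ([lim_sep]) for the separator of the limit
   [(A,B)] of the sequence.

   Existence.  [U] is infinite ([lim_sep_infinite]): a finite [U] would
   eventually lie in every separator [A_i ∩ B_i]; tightness then forces
   [A_i ∩ B_i = U] for infinitely many [i], and two such distinct
   separations leave a vertex strictly between them whose walk to [U] gives
   a contradiction.  By the comb lemma ([comb_exists], via a breadth-first
   spanning tree and König's lemma) an infinite vertex set of a connected
   locally finite graph is the set of teeth of a comb; the end of its spine
   lies in the closure of [U].

   Two inequivalent rays are distinguished by a finite-order
   separation ([nonequiv_sep]), hence by hypothesis by some [{C,D} ∈ N].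
   An end in the closure of [U] oriented towards [D] forbids [U ⊆ C]
   ([closure_not_inside]), so neither side of [{C,D}] contains [U];
   nestedness then puts every [A_i], hence [U ⊆ ⋃ A_i], on one side
   ([closure_ends_not_distinguished]), a contradiction. *)

Lemma inf_pigeon {T} (P : nat -> T -> Prop) (l : list T) :
  (forall M, exists i, M <= i /\ exists x, In x l /\ P i x) ->
  exists x, In x l /\ forall M, exists i, M <= i /\ P i x.
Proof.
  induction l as [|a l IH]; intros H.
  - destruct (H 0) as [i [_ [x [[] _]]]].
  - destruct (classic (forall M, exists i, M <= i /\ P i a)) as [Ha|Ha].
    + exists a; split; [left|]; auto.
    + apply not_all_ex_not in Ha as [M0 HM0].
      destruct IH as [x [Hx Hi]].
      * intros M. destruct (H (max M M0)) as [i [Hi [x [[<-|Hx] Px]]]].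
        -- exfalso; apply HM0; exists i; split; [lia|auto].
        -- exists i; split; [lia|]. eauto.
      * exists x; split; [right|]; auto.
Qed.

Lemma inj_avoid {T} (r : nat -> T) :
  (forall n m, r n = r m -> n = m) ->
  forall l, exists M, forall n, M <= n -> ~ In (r n) l.
Proof.
  intros Hi l; induction l as [|a l [M HM]].
  - exists 0; intros n _ [].
  - destruct (classic (exists k, r k = a)) as [[k Hk]|Hk].
    + exists (max M (S k)); intros n Hn [Ha|Ha].
      * rewrite <- Hk in Ha. apply Hi in Ha. lia.
      * apply (HM n); [lia|auto].
    + exists M; intros n Hn [Ha|Ha]; [apply Hk; eauto|apply (HM n); auto].
Qed.

Lemma list_bound {T} (P : T -> nat -> Prop) (l : list T) :
  (forall x, In x l -> exists n, P x n) ->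
  exists M, forall x, In x l -> exists n, n <= M /\ P x n.
Proof.
  induction l as [|a l IH]; intros H.
  - exists 0; intros x [].
  - destruct (H a (or_introl eq_refl)) as [na Ha].
    destruct IH as [M HM]; [intros; apply H; right; auto|].
    exists (max na M). intros x [<-|Hx].
    + exists na; split; [lia|auto].
    + destruct (HM x Hx) as [n [? ?]]; exists n; split; [lia|auto].
Qed.

Lemma finite_union {T} V (l : list T) (Q : T -> V -> Prop) :
  (forall x, In x l -> finite_set V (Q x)) ->
  finite_set V (fun v => exists x, In x l /\ Q x v).
Proof.
  induction l as [|a l IH]; intros H.
  - exists []; intros v [x [[] _]].
  - destruct (H a (or_introl eq_refl)) as [la Ha].
    destruct IH as [lb Hb]; [intros; apply H; right; auto|].
    exists (la ++ lb). intros v [x [[<-|Hx] Hq]]; apply in_or_app.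
    + left; auto.
    + right; apply Hb; eauto.
Qed.

Lemma often_increasing (Q : nat -> Prop) :
  (forall M, exists n, M <= n /\ Q n) ->
  exists f : nat -> nat, (forall i j, i < j -> f i < f j) /\ forall i, Q (f i).
Proof.
  intros H. destruct (choice _ H) as [g Hg].
  set (f := fun i => Nat.iter i (fun n => g (S n)) (g 0)).
  assert (Hstep : forall i, f i < f (S i)).
  { intros i. unfold f at 2. rewrite Nat.iter_succ. fold (f i). destruct (Hg (S (f i))). lia. }
  exists f; split.
  - intros i j Hij. induction j; [lia|].
    destruct (Nat.eq_dec i j) as [->|]; [apply Hstep|].
    specialize (Hstep j). specialize (IHj ltac:(lia)). lia.
  - intros [|i]; [apply (Hg 0)|]. unfold f; rewrite Nat.iter_succ. apply Hg.
Qed.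

Section Walks.
Variable V : Type.
Variable adj : V -> V -> Prop.
Hypothesis adj_sym : forall u v, adj u v -> adj v u.

Lemma walk_mono (S S' : V -> Prop) u v :
  (forall x, S x -> S' x) -> walk_in V adj S u v -> walk_in V adj S' u v.
Proof. intros H W; induction W; [apply walk_refl|eapply walk_step]; eauto. Qed.

Lemma walk_start (S : V -> Prop) u v : walk_in V adj S u v -> S u.
Proof. intros W; destruct W; auto. Qed.

Lemma walk_trans (S : V -> Prop) u v w :
  walk_in V adj S u v -> walk_in V adj S v w -> walk_in V adj S u w.
Proof. intros W; revert w; induction W; intros; auto. eapply walk_step; eauto. Qed.

Lemma walk_rev (S : V -> Prop) u v : walk_in V adj S u v -> walk_in V adj S v u.
Proof.
  intros W; induction W as [v Sv|u w v Su Huw W IH]; [apply walk_refl; auto|].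
  eapply walk_trans; [exact IH|].
  eapply walk_step; [eapply walk_start; eauto|apply adj_sym; exact Huw|apply walk_refl; auto].
Qed.

Lemma ray_walk (r : nat -> V) (Q : V -> Prop) M :
  is_ray V adj r -> (forall n, M <= n -> Q (r n)) ->
  forall n, M <= n -> walk_in V adj Q (r M) (r n).
Proof.
  intros [_ Ha] HQ n Hn. induction n.
  - replace M with 0 by lia. apply walk_refl; auto.
  - destruct (Nat.eq_dec M (S n)) as [->|Hne]; [apply walk_refl; auto|].
    eapply walk_trans; [apply IHn; lia|].
    eapply walk_step; [apply HQ; lia|apply Ha|apply walk_refl; apply HQ; lia].
Qed.

Lemma chain_walk (l : list V) (a x0 : V) :
  adj_chain V adj (a :: l) -> walk_in V adj (fun x => In x (a :: l)) a (last (a :: l) x0).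
Proof.
  revert a; induction l as [|b l IH]; intros a Hch.
  - apply walk_refl; left; auto.
  - destruct Hch as [Hab Hch].
    eapply walk_step; [left; auto|exact Hab|].
    eapply walk_mono; [|apply IH, Hch]. intros x Hx; right; exact Hx.
Qed.

Lemma sep_sym A B : is_sep V adj A B -> is_sep V adj B A.
Proof.
  intros [Hc He]; split; [intros v; destruct (Hc v); auto|].
  intros u v Bu nAu Av nBv Huv. apply (He v u Av nBv Bu nAu). auto.
Qed.

Lemma walk_side (A B S : V -> Prop) a b :
  is_sep V adj A B -> (forall v, S v -> ~ (A v /\ B v)) ->
  walk_in V adj S a b -> A a -> ~ B a -> A b /\ ~ B b.
Proof.
  intros [Hc He] HS W; induction W as [v|u w v Su Huw W IH]; intros HA HB; auto.
  apply IH.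
  - destruct (Hc w); auto. destruct (classic (A w)); auto. exfalso. eapply He; eauto.
  - intro Bw. destruct (classic (A w)) as [Aw|nAw].
    + apply (HS w); [eapply walk_start; eauto|tauto].
    + eapply He; eauto.
Qed.

Lemma walk_cross (S : V -> Prop) a b : walk_in V adj S a b ->
  exists l, In a l /\ (forall x, In x l -> S x) /\
    forall A B, is_sep V adj A B -> A a -> ~ B a -> B b -> exists x, In x l /\ A x /\ B x.
Proof.
  intros W; induction W as [v Sv|u w v Su Huw W [l [Hw [HlS Hl]]]].
  - exists [v]; split; [left; auto|split; [intros x [->|[]]; auto|]].
    intros A B _ _ Hn Hb; tauto.
  - exists (u :: l); split; [left; auto|split; [intros x [->|Hx]; auto|]].
    intros A B Hs HA HnB Hb.
    destruct (classic (B w)) as [Bw|nBw].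
    + destruct (classic (A w)) as [Aw|nAw].
      * exists w; split; [right|]; auto.
      * exfalso. destruct Hs as [_ He]. eapply He; eauto.
    + assert (A w) by (destruct Hs as [Hc _]; destruct (Hc w); tauto).
      destruct (Hl A B Hs H nBw Hb) as [x [? ?]]. exists x; split; [right|]; auto.
Qed.

Lemma walk_meets_separator (S A B : V -> Prop) a b :
  walk_in V adj S a b -> is_sep V adj A B -> A a -> ~ B a -> B b ->
  exists x, S x /\ A x /\ B x.
Proof.
  intros W Hs Aa nBa Bb. destruct (walk_cross S a b W) as [l [_ [HlS Hl]]].
  destruct (Hl A B Hs Aa nBa Bb) as [x [Hx ABx]]. exists x; auto.
Qed.

Lemma walk_crosses_often (S : V -> Prop) (Cs Ds : nat -> V -> Prop) a b :
  walk_in V adj S a b -> (forall k, is_sep V adj (Cs k) (Ds k)) ->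
  (forall M, exists k, M <= k /\ Cs k a /\ ~ Ds k a /\ Ds k b) ->
  exists x, S x /\ forall M, exists k, M <= k /\ Cs k x /\ Ds k x.
Proof.
  intros W Hs Hoften. destruct (walk_cross S a b W) as [l [_ [HlS Hl]]].
  destruct (inf_pigeon (fun k x => Cs k x /\ Ds k x) l) as [x [Hx Hxk]].
  - intros M. destruct (Hoften M) as [k [HMk [Ca [nDa Db]]]].
    exists k; split; [exact HMk|]. apply (Hl (Cs k) (Ds k)); auto.
  - exists x; split; auto.
Qed.

Lemma walk_exit (S P : V -> Prop) a b : walk_in V adj S a b -> ~ P a -> P b ->
  exists l f, walk_in V adj (fun v => ~ P v) a l /\ P f /\ adj l f.
Proof.
  intros W; induction W as [v|u w v Su Huw W IH]; intros Pa Pb; [tauto|].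
  destruct (classic (P w)) as [Pw|Pw].
  - exists u, w; repeat split; auto. apply walk_refl; auto.
  - destruct (IH Pw Pb) as [l [f [? ?]]]. exists l, f; split; auto. eapply walk_step; eauto.
Qed.

End Walks.

Section Ends.
Variable V : Type.
Variable adj : V -> V -> Prop.
Hypothesis adj_sym : forall u v, adj u v -> adj v u.

Lemma ray_equiv_refl (r : nat -> V) : is_ray V adj r -> ray_equiv V adj r r.
Proof.
  intros Rr X [l Hl]. destruct (inj_avoid r (proj1 Rr) l) as [M HM].
  exists M, M. repeat split.
  - intros n Hn Xn. apply (HM n Hn); auto.
  - intros n Hn Xn. apply (HM n Hn); auto.
  - apply walk_refl. intros XM. apply (HM M (le_n _)); auto.
Qed.

(* Two inequivalent rays are separated by a finite set [X]; the component
   of [G - X] containing a tail of the first ray yields a finite-order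
   separation distinguishing their ends. *)
Lemma nonequiv_sep (r1 r2 : nat -> V) :
  is_ray V adj r1 -> is_ray V adj r2 -> ~ ray_equiv V adj r1 r2 ->
  exists C D, distinguishes_ends V adj r1 r2 C D.
Proof.
  intros R1 R2 Hne.
  apply not_all_ex_not in Hne as [X HX]. apply imply_to_and in HX as [[l Hl] HX].
  destruct (inj_avoid r1 (proj1 R1) l) as [N1 HN1].
  destruct (inj_avoid r2 (proj1 R2) l) as [N2 HN2].
  set (K := fun v => ~ X v /\ walk_in V adj (fun v => ~ X v) v (r1 N1)).
  assert (tail1 : forall n, N1 <= n -> ~ X (r1 n)) by (intros n Hn Xn; apply (HN1 n Hn); auto).
  assert (tail2 : forall n, N2 <= n -> ~ X (r2 n)) by (intros n Hn Xn; apply (HN2 n Hn); auto).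
  assert (Hnw : ~ walk_in V adj (fun v => ~ X v) (r1 N1) (r2 N2))
    by (intros W; apply HX; exists N1, N2; auto).
  assert (Hsep : is_sep V adj (fun v => ~ K v) (fun v => K v \/ X v)).
  { split; [intros v; destruct (classic (K v)); auto|].
    intros u v nKu nXu Dv nnKv Huv. apply nKu. split; [tauto|].
    assert (Kv : K v) by tauto. apply (walk_step _ _ _ u v); [tauto|exact Huv|apply Kv]. }
  assert (Hfin : forall A B, (forall v, A v /\ B v -> X v) -> finite_order V A B)
    by (intros A B H; exists l; intros v Hv; apply Hl, H, Hv).
  exists (fun v => ~ K v), (fun v => K v \/ X v). split; split.
  - exact Hsep.
  - split; [apply Hfin; intros v [? [?|?]]; tauto|].
    exists N1. intros n Hn.
    assert (K (r1 n)); [|tauto].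
    split; [apply tail1; auto|]. apply walk_rev; auto. apply ray_walk; auto.
  - apply sep_sym; auto.
  - split; [apply Hfin; intros v [[?|?] ?]; tauto|].
    exists N2. intros n Hn.
    assert (~ K (r2 n)); [|pose proof (tail2 n Hn); tauto].
    intros [_ W]. apply Hnw. apply walk_rev; auto. eapply walk_trans; [|exact W].
    apply ray_walk; auto.
Qed.

Lemma ray_equiv_same_side (t r : nat -> V) (C D : V -> Prop) :
  is_ray V adj t -> is_ray V adj r -> ray_equiv V adj t r ->
  is_sep V adj C D -> finite_order V C D ->
  (exists e, forall n, e <= n -> D (r n) /\ ~ C (r n)) ->
  exists n0, forall n, n0 <= n -> D (t n) /\ ~ C (t n).
Proof.
  intros Rt Rr HEq Hs Hfin [e He].
  destruct (HEq (fun v => C v /\ D v) Hfin) as [n0 [m0 [Ht [Hr W]]]].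
  set (M := max m0 e).
  assert (W2 : walk_in V adj (fun v => ~ (C v /\ D v)) (r m0) (r M))
    by (apply ray_walk; [auto|intros n Hn; apply Hr; auto|unfold M; lia]).
  assert (Ht0 : D (t n0) /\ ~ C (t n0)).
  { apply (walk_side V adj D C (fun v => ~ (C v /\ D v)) (r M) (t n0)).
    - apply sep_sym; auto.
    - intros v Hv [? ?]; tauto.
    - apply walk_rev; auto. eapply walk_trans; eauto.
    - apply He; unfold M; lia.
    - apply He; unfold M; lia. }
  exists n0. intros n Hn.
  apply (walk_side V adj D C (fun v => ~ (C v /\ D v)) (t n0) (t n)).
  - apply sep_sym; auto.
  - intros v Hv [? ?]; tauto.
  - apply ray_walk; auto.
  - apply Ht0.
  - apply Ht0.
Qed.

(* A comb whose spine eventually lies strictly on the [D]-side of a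
   finite-order separation cannot have all its teeth in [C]: infinitely many
   of its disjoint paths would cross the finite separator. *)
Lemma comb_not_behind_sep (t : nat -> V) (U C D : V -> Prop) :
  is_ray V adj t -> comb_with_teeth_in V adj t U -> (forall v, U v -> C v) ->
  is_sep V adj C D -> finite_order V C D ->
  (exists n0, forall n, n0 <= n -> D (t n) /\ ~ C (t n)) -> False.
Proof.
  intros Rt [P [HP [Hdis [Hhead Hlast]]]] HUC Hs [l Hl] [n0 Htail].
  destruct (choice _ Hhead) as [k Hk].
  assert (Hinj : forall i j, t (k i) = t (k j) -> i = j).
  { intros i j E. apply NNPP; intro Hne.
    destruct (Hk i) as [rest [Ei _]]. destruct (Hk j) as [rest' [Ej _]].
    apply (Hdis i j (t (k i)) Hne); [rewrite Ei|rewrite E, Ej]; left; auto. }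
  destruct (inj_avoid (fun i => t (k i)) Hinj (map t (seq 0 n0))) as [N1 HN1].
  destruct (inf_pigeon (fun i x => In x (P i)) l) as [x [_ Hx]].
  { intros M. exists (max M N1); split; [lia|].
    set (i := max M N1).
    assert (Hki : n0 <= k i).
    { destruct (le_lt_dec n0 (k i)); auto. exfalso. apply (HN1 i); [unfold i; lia|].
      apply in_map. apply in_seq. lia. }
    destruct (Hk i) as [rest [Ei _]]. destruct (HP i) as [_ [_ Hch]]. rewrite Ei in Hch.
    destruct (walk_meets_separator V adj _ D C _ _ (chain_walk V adj rest (t (k i)) (t 0) Hch))
      as [x [Hxi [Dx Cx]]]; [apply sep_sym; auto|apply Htail; auto|apply Htail; auto|..].
    - rewrite <- Ei. apply HUC, Hlast.
    - exists x. rewrite Ei. split; auto. }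
  destruct (Hx 0) as [i1 [_ H1]]. destruct (Hx (S i1)) as [i2 [Hi2 H2]].
  apply (Hdis i1 i2 x); auto. lia.
Qed.

Lemma closure_not_inside (U C D : V -> Prop) (r : nat -> V) :
  is_ray V adj r -> end_in_closure V adj r U -> end_orients V adj r C D ->
  ~ (forall v, U v -> C v).
Proof.
  intros Rr [t [Rt [HEq Hcomb]]] [Hs [Hfin Hr]] HUC.
  apply (comb_not_behind_sep t U C D Rt Hcomb HUC Hs Hfin).
  apply (ray_equiv_same_side t r C D); auto.
Qed.

End Ends.

Section BreadthFirstTree.
Variable V : Type.
Variable adj : V -> V -> Prop.

Fixpoint walk_len (n : nat) (u v : V) : Prop :=
  match n with 0 => u = v | S n => exists w, adj u w /\ walk_len n w v end.

Lemma walk_len_of_walk (Q : V -> Prop) u v : walk_in V adj Q u v -> exists n, walk_len n u v.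
Proof.
  intros W; induction W as [|u w v _ Huw _ [n Hn]]; [exists 0; reflexivity|].
  exists (S n); simpl; eauto.
Qed.

Lemma walk_len_snoc n u w v : walk_len n u w -> adj w v -> walk_len (S n) u v.
Proof.
  revert u; induction n; simpl; intros u H Hwv; [subst; exists v; auto|].
  destruct H as [x [? ?]]. exists x; split; auto. apply (IHn x); auto.
Qed.

Lemma walk_len_last n u v : walk_len (S n) u v -> exists w, walk_len n u w /\ adj w v.
Proof.
  revert u; induction n; simpl; intros u [x [Hx H]]; [subst; exists u; split; auto|].
  destruct (IHn x H) as [y [? ?]]. exists y; split; eauto.
Qed.

Lemma bfs_tree (Gconn : connected_graph V adj) (root : V) :
  exists (d : V -> nat) (p : V -> V), d root = 0 /\ (forall x, d x = 0 -> x = root) /\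
    (forall x, 0 < d x -> adj (p x) x /\ d (p x) + 1 = d x).
Proof.
  assert (Hd : forall x, exists n, walk_len n root x /\ forall m, walk_len m root x -> n <= m).
  { intros x.
    destruct (dec_inh_nat_subset_has_unique_least_element (fun n => walk_len n root x))
      as [n [Hn _]]; [intros n; apply classic|eapply walk_len_of_walk; apply Gconn|].
    exists n; exact Hn. }
  destruct (choice _ Hd) as [d Hdf].
  assert (Hp : forall x, exists q, 0 < d x -> adj q x /\ d q + 1 = d x).
  { intros x. destruct (d x) eqn:E; [exists x; lia|].
    destruct (Hdf x) as [W Wmin]. rewrite E in W. destruct (walk_len_last _ _ _ W) as [q [Wq Hq]].
    exists q; intros _; split; auto.
    specialize (Wmin _ (walk_len_snoc _ _ _ _ (proj1 (Hdf q)) Hq)).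
    specialize (proj2 (Hdf q) _ Wq). lia. }
  destruct (choice _ Hp) as [p Hpf].
  exists d, p; split; [|split]; auto.
  - specialize (proj2 (Hdf root) 0 eq_refl). lia.
  - intros x Hx. destruct (Hdf x) as [W _]. rewrite Hx in W. symmetry; exact W.
Qed.

End BreadthFirstTree.

Section TreeComb.
Variable V : Type.
Variable adj : V -> V -> Prop.
Variable d : V -> nat.
Variable p : V -> V.
Hypothesis parent_edge : forall x, 0 < d x -> adj (p x) x /\ d (p x) + 1 = d x.

Definition anc (k : nat) (y : V) : V := Nat.iter (d y - k) p y.

Lemma d_iter_parent m y : m <= d y -> d (Nat.iter m p y) = d y - m.
Proof.
  induction m; intros Hm; [simpl; lia|]. rewrite Nat.iter_succ.
  destruct (parent_edge (Nat.iter m p y)) as [_ E]; rewrite IHm in *; lia.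
Qed.

Lemma d_anc k y : k <= d y -> d (anc k y) = k.
Proof. intros Hk. unfold anc. rewrite d_iter_parent; lia. Qed.

Lemma anc_anc k m y : k <= m -> m <= d y -> anc k (anc m y) = anc k y.
Proof.
  intros Hkm Hm. unfold anc at 1. rewrite d_anc by lia. unfold anc.
  rewrite <- Nat.iter_add. f_equal. lia.
Qed.

Lemma anc_self y : anc (d y) y = y.
Proof. unfold anc. rewrite Nat.sub_diag. reflexivity. Qed.

Lemma parent_anc k y : k + 1 <= d y -> p (anc (k + 1) y) = anc k y.
Proof. intros Hk. unfold anc. rewrite <- Nat.iter_succ. f_equal. lia. Qed.

Lemma adj_anc k y : k + 1 <= d y -> adj (anc k y) (anc (k + 1) y).
Proof. intros Hk. rewrite <- parent_anc by auto. apply parent_edge. rewrite d_anc; lia. Qed.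

Definition below (x y : V) : Prop := d x <= d y /\ anc (d x) y = x.

Lemma below_refl x : below x x.
Proof. split; [lia|apply anc_self]. Qed.

Lemma below_trans x y z : below x y -> below y z -> below x z.
Proof.
  intros [Hxy Exy] [Hyz Eyz]. split; [lia|].
  rewrite <- Eyz, anc_anc in Exy by lia. exact Exy.
Qed.

Lemma below_parent x : 0 < d x -> below (p x) x.
Proof.
  intros Hx. destruct (parent_edge x Hx) as [_ E]. split; [lia|].
  unfold anc. replace (d x - d (p x)) with 1 by lia. reflexivity.
Qed.

Lemma below_root root y : d root = 0 -> (forall x, d x = 0 -> x = root) -> below root y.
Proof.
  intros d_root d_zero. split; [lia|]. apply d_zero. rewrite d_root. apply d_anc. lia.
Qed.

Lemma below_anc j y : j <= d y -> below (anc j y) y.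
Proof. intros Hj. split; rewrite d_anc; auto. Qed.

Lemma below_anc_iff x j y : d x <= j -> j <= d y -> (below x (anc j y) <-> below x y).
Proof.
  intros Hxj Hjy. unfold below. rewrite d_anc, anc_anc by lia. split; intros [_ E]; split; auto; lia.
Qed.

Definition tree_path (k : nat) (u : V) : list V :=
  map (fun j => anc j u) (seq k (S (d u - k))).

Lemma adj_chain_map_seq (f : nat -> V) len : forall a,
  (forall k, a <= k -> k < a + len -> adj (f k) (f (k + 1))) ->
  adj_chain V adj (map f (seq a (S len))).
Proof.
  induction len; intros a H; simpl; auto.
  simpl in IHlen. split.
  - replace (S a) with (a + 1) by lia. apply H; lia.
  - apply (IHlen (S a)). intros k Hk Hk2. apply H; lia.
Qed.

Lemma tree_path_is_path k u : k <= d u -> is_path V adj (tree_path k u).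
Proof.
  intros Hk. split; [discriminate|split].
  - apply NoDup_map_NoDup_ForallPairs; [|apply seq_NoDup].
    intros a b Ha Hb E. apply in_seq in Ha, Hb.
    rewrite <- (d_anc a u), <- (d_anc b u) by lia. rewrite E; auto.
  - apply adj_chain_map_seq. intros j Hj Hj2. apply adj_anc. lia.
Qed.

Lemma tree_path_last k u x0 : k <= d u -> last (tree_path k u) x0 = u.
Proof.
  intros Hk. unfold tree_path. rewrite seq_S, map_app. cbn [map]. rewrite last_last.
  replace (k + (d u - k)) with (d u) by lia. apply anc_self.
Qed.

Variable U : V -> Prop.
Hypothesis Glf : locally_finite V adj.

Definition many_below (x : V) : Prop := ~ finite_set V (fun y => U y /\ below x y).

(* König's step: as [x] has finitely many children, one of them again has
   infinitely many descendants in [U]. *)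
Lemma many_below_child x : many_below x -> exists c, d c = d x + 1 /\ p c = x /\ many_below c.
Proof.
  intros Hx. apply NNPP; intro Hc. apply Hx.
  destruct (Glf x) as [lx Hlx].
  destruct (finite_union V lx (fun c y => d c = d x + 1 /\ p c = x /\ U y /\ below c y)) as [L HL].
  { intros c _. destruct (classic (d c = d x + 1 /\ p c = x)) as [[Ha Hb]|Hn].
    - apply NNPP; intro Hf. apply Hc. exists c; repeat split; auto.
      intros [l Hl]. apply Hf. exists l. intros v [? [? ?]]. apply Hl. tauto.
    - exists []. intros v [? [? _]]. tauto. }
  exists (x :: L). intros y [Uy [Hxy Ey]].
  destruct (Nat.eq_dec (d y) (d x)) as [E|E].
  - left. rewrite <- E, anc_self in Ey. auto.
  - right. apply HL. exists (anc (d x + 1) y).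
    assert (Pc : p (anc (d x + 1) y) = x) by (rewrite parent_anc by lia; auto).
    split; [apply Hlx; rewrite <- Pc at 1; apply parent_edge; rewrite d_anc; lia|].
    split; [apply d_anc; lia|]. split; [auto|]. split; [auto|]. apply below_anc. lia.
Qed.

Lemma konig_ray root : d root = 0 -> many_below root ->
  exists s, is_ray V adj s /\ (forall n, d (s n) = n) /\
    (forall n m, n <= m -> below (s n) (s m)) /\ (forall n, many_below (s n)).
Proof.
  intros d_root Hroot.
  destruct (choice (fun x c => many_below x -> d c = d x + 1 /\ p c = x /\ many_below c))
    as [g Hg].
  { intros x. destruct (classic (many_below x)) as [Hx|Hx].
    - destruct (many_below_child x Hx) as [c Hc]; exists c; auto.
    - exists x; tauto. }
  set (s := fun n => Nat.iter n g root).
  assert (Hsucc : forall n, s (S n) = g (s n)) by (intros n; apply Nat.iter_succ).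
  assert (Hs : forall n, many_below (s n) /\ d (s n) = n /\ p (s (S n)) = s n).
  { induction n as [|n [Hm [Hd _]]]; rewrite !Hsucc.
    - destruct (Hg root Hroot) as [_ [P0 _]]. auto.
    - destruct (Hg (s n) Hm) as [Dn [Pn Mn]].
      destruct (Hg (g (s n)) Mn) as [_ [Pn' _]]. repeat split; auto. lia. }
  assert (Hpos : forall n, 0 < d (s (S n))) by (intros n; rewrite (proj1 (proj2 (Hs (S n)))); lia).
  exists s; split; [split|split; [|split]].
  - intros n m E. rewrite <- (proj1 (proj2 (Hs n))), <- (proj1 (proj2 (Hs m))), E; auto.
  - intros n. rewrite <- (proj2 (proj2 (Hs n))) at 1. apply parent_edge, Hpos.
  - apply Hs.
  - intros n m Hnm. induction m; [replace n with 0 by lia; apply below_refl|].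
    destruct (Nat.eq_dec n (S m)) as [->|Hne]; [apply below_refl|].
    apply below_trans with (s m); [apply IHm; lia|].
    rewrite <- (proj2 (proj2 (Hs m))) at 1. apply below_parent, Hpos.
  - apply Hs.
Qed.

Definition branch_tooth (s : nat -> V) (n : nat) (u : V) : Prop :=
  U u /\ below (s n) u /\ ~ below (s (S n)) u.

(* Along a König ray, teeth exist at arbitrarily large depths: following a
   descendant [u] of [s M] in [U] down the spine, it must branch off before
   depth [d u]. *)
Lemma branch_teeth_often (s : nat -> V) :
  (forall n, d (s n) = n) -> (forall n, many_below (s n)) ->
  forall M, exists n, M <= n /\ exists u, branch_tooth s n u.
Proof.
  intros Hd Hmany M.
  assert (Hu : exists u, U u /\ below (s M) u).
  { apply NNPP; intro Hn. apply (Hmany M). exists []. intros v Hv. apply Hn; eauto. }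
  destruct Hu as [u [Uu HMu]].
  apply NNPP; intro Hc.
  assert (Hall : forall k, below (s (M + k)) u).
  { induction k; [rewrite Nat.add_0_r; auto|].
    apply NNPP; intro Hk. apply Hc. exists (M + k); split; [lia|].
    exists u. split; [exact Uu|split; [exact IHk|]]. rewrite Nat.add_succ_r in Hk. exact Hk. }
  destruct (Hall (S (d u))) as [Hle _]. rewrite Hd in Hle. lia.
Qed.

(* Tree paths from the spine down to teeth taken at increasing depths are
   disjoint and meet the spine only in their first vertex: a comb. *)
Lemma comb_of_spine (s : nat -> V) :
  is_ray V adj s -> (forall n, d (s n) = n) -> (forall n m, n <= m -> below (s n) (s m)) ->
  (forall M, exists n, M <= n /\ exists u, branch_tooth s n u) ->
  comb_with_teeth_in V adj s U.
Proof.
  intros Rs Hd Hsb Hteeth.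
  destruct (often_increasing _ Hteeth) as [idx [Hinc Hidx]].
  destruct (choice _ Hidx) as [tu Htu].
  assert (Hdep : forall i, idx i <= d (tu i))
    by (intros i; destruct (Htu i) as [_ [[H _] _]]; rewrite Hd in H; exact H).
  set (tail := fun i => map (fun j => anc j (tu i)) (seq (S (idx i)) (d (tu i) - idx i))).
  assert (Hcons : forall i, tree_path (idx i) (tu i) = s (idx i) :: tail i).
  { intros i. destruct (Htu i) as [_ [[_ E] _]]. rewrite Hd in E.
    unfold tree_path; simpl. rewrite E. reflexivity. }
  assert (Htail : forall i z, In z (tail i) ->
            idx i < d z /\ below (s (idx i)) z /\ ~ below (s (S (idx i))) z).
  { intros i z Hz. apply in_map_iff in Hz as [j [<- Hj]]. apply in_seq in Hj.
    destruct (Htu i) as [_ [Hb Hnb]].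
    rewrite d_anc, !below_anc_iff by (rewrite ?Hd; lia). split; [lia|split; assumption]. }
  assert (Hin : forall i z, In z (tree_path (idx i) (tu i)) -> below (s (idx i)) z).
  { intros i z. rewrite Hcons. intros [<-|Hz]; [apply below_refl|apply (Htail i z Hz)]. }
  exists (fun i => tree_path (idx i) (tu i)). split; [|split; [|split]].
  - intros i. apply tree_path_is_path, Hdep.
  - assert (Hord : forall a b z, idx a < idx b ->
              In z (tree_path (idx a) (tu a)) -> In z (tree_path (idx b) (tu b)) -> False).
    { intros a b z Hab Ha Hb.
      assert (Hz : below (s (S (idx a))) z) by (apply below_trans with (s (idx b)); auto).
      rewrite Hcons in Ha. destruct Ha as [<-|Ha]; [|apply (Htail a z Ha); auto].
      destruct (Hin b _ Hb) as [Hle _]. rewrite !Hd in Hle. lia. }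
    intros i j z Hij Hi Hj.
    destruct (Nat.lt_total i j) as [Hl|[Hl|Hl]]; [| lia |];
      specialize (Hinc _ _ Hl); eauto.
  - intros i. exists (idx i), (tail i). split; [apply Hcons|].
    intros y Hy m ->. destruct (Htail i _ Hy) as [Hlt [_ Hnb]]. rewrite Hd in Hlt.
    apply Hnb, Hsb. lia.
  - intros i. rewrite tree_path_last by apply Hdep. apply (Htu i).
Qed.

End TreeComb.

Lemma comb_exists V adj (Gconn : connected_graph V adj) (Glf : locally_finite V adj)
  (U : V -> Prop) : ~ finite_set V U -> exists s, is_ray V adj s /\ comb_with_teeth_in V adj s U.
Proof.
  intros HU.
  assert (Hv : exists root, U root)
    by (apply NNPP; intro Hn; apply HU; exists []; intros v Uv; apply Hn; eauto).
  destruct Hv as [root _].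
  destruct (bfs_tree V adj Gconn root) as [d [p [d_root [d_zero parent_edge]]]].
  destruct (konig_ray V adj d p parent_edge U Glf root d_root) as [s [Rs [Hd [Hsb Hmany]]]].
  { intros [l Hl]. apply HU. exists l. intros v Uv. apply Hl. split; auto.
    apply (below_root V adj d p parent_edge); auto. }
  exists s; split; auto.
  eapply comb_of_spine; eauto. eapply branch_teeth_often; eauto.
Qed.

Lemma strict_sep_witness V adj (A B C D : V -> Prop) :
  is_sep V adj A B -> is_sep V adj C D -> sep_lt V A B C D ->
  (forall v, C v /\ D v -> A v) -> (forall v, A v /\ B v -> D v) ->
  exists z, (C z /\ ~ D z) /\ (B z /\ ~ A z).
Proof.
  intros [HcAB _] [HcCD _] [[HAC HDB] Hne] HCD HAB.
  destruct (classic (exists v, C v /\ ~ A v)) as [[v [Cv nAv]]|H1].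
  - exists v. assert (Bv : B v) by (destruct (HcAB v); tauto).
    split; split; auto; intro Dv; apply nAv, HCD; auto.
  - destruct (classic (exists v, B v /\ ~ D v)) as [[v [Bv nDv]]|H2].
    + exists v. assert (Cv : C v) by (destruct (HcCD v); tauto).
      split; split; auto; intro Av; apply nDv, HAB; auto.
    + exfalso. apply Hne. split; intros v; split; intros H; auto;
        apply NNPP; intro; [apply H1|apply H2]; eauto.
Qed.

Section IncreasingSequence.
Variable V : Type.
Variable adj : V -> V -> Prop.
Hypothesis adj_sym : forall u v, adj u v -> adj v u.
Hypothesis Gconn : connected_graph V adj.
Hypothesis Glf : locally_finite V adj.
Variables As Bs : nat -> V -> Prop.
Hypothesis incr : forall i j, i < j -> sep_lt V (As i) (Bs i) (As j) (Bs j).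
Hypothesis tight : forall i, tight_sep V adj (As i) (Bs i).
Hypothesis nonexh : exists v, forall i, Bs i v.

Definition lim_sep (v : V) : Prop := (exists i, As i v) /\ (forall i, Bs i v).

Lemma seq_mono i j : i <= j -> (forall v, As i v -> As j v) /\ (forall v, Bs j v -> Bs i v).
Proof.
  intros Hij. destruct (Nat.eq_dec i j) as [->|Hne]; [split; auto|].
  apply (incr i j). lia.
Qed.

Lemma seq_sep i : is_sep V adj (As i) (Bs i).
Proof. apply (tight i). Qed.

Lemma lim_sep_of_often x : (forall M, exists i, M <= i /\ As i x /\ Bs i x) -> lim_sep x.
Proof.
  intros H. split; [destruct (H 0) as [i [_ [? _]]]; eauto|].
  intros k. destruct (H k) as [i [Hi [_ Hb]]]. apply (proj2 (seq_mono k i Hi)); auto.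
Qed.

(* A walk from the small side of [(A_0,B_0)] to a vertex of [⋂ B_i] crosses
   every separator, hence meets the limit separator. *)
Lemma lim_sep_nonempty : exists w, lim_sep w.
Proof.
  destruct (tight 0) as [_ [[K [[[[a Ka] _] _] HK]] _]].
  destruct nonexh as [v Hv].
  destruct (walk_crosses_often V adj _ As Bs a v (Gconn a v) seq_sep) as [x [_ Hx]].
  - intros M. exists M; split; auto. split; [|split; auto].
    + apply (proj1 (seq_mono 0 M ltac:(lia))), HK; auto.
    + intro HB. apply (HK a Ka). apply (proj2 (seq_mono 0 M ltac:(lia))); auto.
  - exists x; apply lim_sep_of_often; auto.
Qed.

Definition far_comp (i : nat) (y : V) : Prop :=
  exists K, tight_component V adj (fun v => As i v /\ Bs i v) K /\
    (forall v, K v -> Bs i v /\ ~ As i v) /\ K y.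

Lemma far_often_outside y : (forall M, exists i, M <= i /\ far_comp i y) ->
  forall k, Bs k y /\ ~ As k y.
Proof.
  intros Hy k. destruct (Hy k) as [i [Hi [K [_ [HK Ky]]]]]. split.
  - apply (proj2 (seq_mono k i Hi)), HK; auto.
  - intros Ak. apply (HK y Ky). apply (proj1 (seq_mono k i Hi)); auto.
Qed.

Section FiniteLimit.
Hypothesis lim_fin : finite_set V lim_sep.

Lemma eventually_inside : exists i0, forall i x, i0 <= i -> lim_sep x -> As i x /\ Bs i x.
Proof.
  destruct lim_fin as [F HF].
  destruct (list_bound (fun x n => lim_sep x -> As n x) F) as [i0 Hi0].
  { intros x _. destruct (classic (lim_sep x)) as [[[n Hn] _]|Ux]; [exists n|exists 0]; tauto. }
  exists i0. intros i x Hi Ux. split; [|apply Ux].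
  destruct (Hi0 x (HF x Ux)) as [n [Hn Hx]]. apply (proj1 (seq_mono n i ltac:(lia))); auto.
Qed.

Lemma far_neighbour : exists y, forall M, exists i, M <= i /\ far_comp i y.
Proof.
  destruct lim_sep_nonempty as [w Uw]. destruct eventually_inside as [i0 Hi0].
  destruct (Glf w) as [lw Hlw].
  destruct (inf_pigeon far_comp lw) as [y [_ Hy]]; [|exists y; exact Hy].
  intros M. exists (max M i0); split; [lia|].
  destruct (tight (max M i0)) as [_ [_ [K [HKt HK]]]].
  destruct (proj2 (proj2 HKt w) (Hi0 (max M i0) w (Nat.le_max_r _ _) Uw)) as [_ [u [Ku Hu]]].
  exists u; split; [apply Hlw, adj_sym; auto|]. exists K; auto.
Qed.

(* For such [y] and large [i] with [far_comp i y], the separator of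
   [(A_i,B_i)] lies in the limit separator: a vertex [x] of it is reached
   from [y] through the tight component, and this walk crosses all later
   separators, so one of its vertices lies in [U]; it cannot lie in the
   component, which avoids [A_i ∩ B_i ⊇ U], so it is [x]. *)
Lemma separator_in_limit y i0 i x :
  (forall M, exists i, M <= i /\ far_comp i y) ->
  (forall i x, i0 <= i -> lim_sep x -> As i x /\ Bs i x) ->
  i0 <= i -> far_comp i y -> As i x -> Bs i x -> lim_sep x.
Proof.
  intros Hy Hi0 Hi [K [[HKc HKn] [HKs Ky]]] Ax Bx. apply NNPP; intros nUx.
  destruct (proj2 (HKn x) (conj Ax Bx)) as [_ [u [Ku Hux]]].
  assert (W : walk_in V adj (fun v => K v \/ v = x) y x).
  { eapply walk_trans.
    - eapply walk_mono; [|apply (proj1 (proj2 (proj2 HKc))); eauto]. auto.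
    - eapply walk_step; [left; auto|eauto|apply walk_refl; auto]. }
  destruct (walk_crosses_often V adj _ Bs As y x W) as [z [Kz Hz]].
  - intros k; apply sep_sym; auto; apply seq_sep.
  - intros M. exists (max M i); split; [lia|].
    split; [apply far_often_outside; auto|split; [apply far_often_outside; auto|]].
    apply (proj1 (seq_mono i (max M i) ltac:(lia))); auto.
  - assert (Uz : lim_sep z)
      by (apply lim_sep_of_often; intros M; destruct (Hz M) as [k [? [? ?]]]; eauto).
    destruct Kz as [Kz| ->]; [|tauto].
    apply (proj1 (proj2 HKc) z Kz). apply Hi0; auto.
Qed.

Lemma boundary_bound : exists j0, forall l f, lim_sep f -> adj f l -> (exists i, As i l) -> As j0 l.
Proof.
  destruct lim_fin as [F HF].
  destruct (finite_union V F adj) as [L HL]; [intros f _; apply Glf|].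
  destruct (list_bound (fun l n => (exists i, As i l) -> As n l) L) as [j0 Hj0].
  { intros l _. destruct (classic (exists i, As i l)) as [[n Hn]|Hn]; [exists n|exists 0]; tauto. }
  exists j0. intros l f Uf Hfl Hl.
  destruct (Hj0 l (HL l (ex_intro _ f (conj (HF f Uf) Hfl)))) as [n [Hn Hnl]].
  apply (proj1 (seq_mono n j0 Hn)), Hnl, Hl.
Qed.

(* Two late separations [i < j] with [far_comp _ y] both have the limit
   separator as separator, so some [z] lies strictly between them.  A walk
   from [z] that avoids the limit separator until its last step stays
   strictly inside [A_j] and [B_i]; its last vertex is a neighbour of the
   limit separator in [A_j] but not in [A_i], impossible once [i] exceeds
   the bound of [boundary_bound]. *)
Lemma finite_limit_absurd : False.
Proof.
  destruct lim_sep_nonempty as [w Uw].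
  destruct eventually_inside as [i0 Hi0].
  destruct far_neighbour as [y Hy].
  destruct boundary_bound as [j0 Hj0].
  destruct (Hy (max i0 j0)) as [i [Hi Qi]].
  destruct (Hy (S i)) as [j [Hj Qj]].
  assert (Xi : forall v, As i v /\ Bs i v -> lim_sep v)
    by (intros v [? ?]; apply (separator_in_limit y i0 i v); auto; lia).
  assert (Xj : forall v, As j v /\ Bs j v -> lim_sep v)
    by (intros v [? ?]; apply (separator_in_limit y i0 j v); auto; lia).
  destruct (strict_sep_witness V adj (As i) (Bs i) (As j) (Bs j))
    as [z [[Ajz nBjz] [Biz nAiz]]].
  { apply seq_sep. } { apply seq_sep. } { apply incr; lia. }
  { intros v Hv. apply (Hi0 i v); [lia|auto]. }
  { intros v Hv. apply (Hi0 j v); [lia|auto]. }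
  assert (nUz : ~ lim_sep z) by (intros Uz; apply nAiz, (Hi0 i z); auto; lia).
  destruct (walk_exit V adj _ lim_sep z w (Gconn z w) nUz Uw) as [l [f [Wl [Uf Hlf]]]].
  assert (Hl1 : As j l /\ ~ Bs j l).
  { apply (walk_side V adj (As j) (Bs j) (fun v => ~ lim_sep v) z l); auto.
    apply seq_sep. }
  assert (Hl2 : Bs i l /\ ~ As i l).
  { apply (walk_side V adj (Bs i) (As i) (fun v => ~ lim_sep v) z l); auto.
    - apply sep_sym; auto; apply seq_sep.
    - intros v nUv [? ?]. auto. }
  apply (proj2 Hl2). apply (proj1 (seq_mono j0 i ltac:(lia))).
  apply (Hj0 l f Uf (adj_sym _ _ Hlf)). exists j; tauto.
Qed.

End FiniteLimit.

Lemma lim_sep_infinite : ~ finite_set V lim_sep.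
Proof. exact finite_limit_absurd. Qed.

End IncreasingSequence.

Lemma nested_sides V (N : (V -> Prop) -> (V -> Prop) -> Prop) (A B C D : V -> Prop) :
  nested V N -> in_sepset V N A B -> in_sepset V N C D ->
  exists W Y, (seteq V A W \/ seteq V B W) /\ (seteq V C Y \/ seteq V D Y) /\
    forall v, W v -> Y v.
Proof.
  intros Hnest [E' [F' [NE' SE']]] [E [F [NE SE]]].
  assert (HCD : (seteq V C E \/ seteq V D E) /\ (seteq V C F \/ seteq V D F))
    by (destruct SE as [[]|[]]; tauto).
  assert (HAB : (seteq V A E' \/ seteq V B E') /\ (seteq V A F' \/ seteq V B F'))
    by (destruct SE' as [[]|[]]; tauto).
  destruct (Hnest _ _ _ _ NE NE') as [[_ H]|[[_ H]|[[_ H]|[_ H]]]].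
  - exists F', F; tauto.
  - exists E', F; tauto.
  - exists F', E; tauto.
  - exists E', E; tauto.
Qed.

Lemma nested_small_side V N (A B C D U : V -> Prop) :
  nested V N -> in_sepset V N A B -> in_sepset V N C D -> (forall v, U v -> B v) ->
  ~ (forall v, U v -> C v) -> ~ (forall v, U v -> D v) ->
  (forall v, A v -> C v) \/ (forall v, A v -> D v).
Proof.
  intros Hnest HAB HCD HUB nC nD.
  destruct (nested_sides V N A B C D Hnest HAB HCD) as [W [Y [HW [HY HWY]]]].
  destruct HW as [HW|HW].
  - destruct HY as [HY|HY]; [left|right]; intros v Av; apply HY, HWY, HW, Av.
  - exfalso. destruct HY as [HY|HY]; [apply nC|apply nD]; intros v Uv; apply HY, HWY, HW, HUB, Uv.
Qed.

Lemma union_one_side V (As : nat -> V -> Prop) (C D : V -> Prop) :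
  (forall i j, i <= j -> forall v, As i v -> As j v) ->
  (forall i, (forall v, As i v -> C v) \/ (forall v, As i v -> D v)) ->
  (forall v, (exists i, As i v) -> C v) \/ (forall v, (exists i, As i v) -> D v).
Proof.
  intros mono Hside.
  destruct (classic (forall M, exists i, M <= i /\ forall v, As i v -> C v)) as [HC|HC].
  - left. intros v [j Aj]. destruct (HC j) as [i [Hij Hi]]. apply Hi, (mono j i Hij); auto.
  - apply not_all_ex_not in HC as [M HM]. right. intros v [j Aj].
    destruct (Hside (max M j)) as [HCi|HDi].
    + exfalso. apply HM. exists (max M j); split; [lia|auto].
    + apply HDi, (mono j (max M j) ltac:(lia)); auto.
Qed.

(* No separation of [N] distinguishes two ends in the closure of the limit
   separator [U]: each of its sides meets [U], so by nestedness every [A_i]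
   lies on one side, and then so does [⋃ A_i ⊇ U]. *)
Lemma closure_ends_not_distinguished V adj (adj_sym : forall u v, adj u v -> adj v u)
  (N : (V -> Prop) -> (V -> Prop) -> Prop) (As Bs : nat -> V -> Prop) (r1 r2 : nat -> V)
  (C D : V -> Prop) :
  nested V N -> (forall i, in_sepset V N (As i) (Bs i)) ->
  (forall i j, i <= j -> forall v, As i v -> As j v) ->
  is_ray V adj r1 -> is_ray V adj r2 ->
  end_in_closure V adj r1 (fun v => (exists i, As i v) /\ (forall i, Bs i v)) ->
  end_in_closure V adj r2 (fun v => (exists i, As i v) /\ (forall i, Bs i v)) ->
  in_sepset V N C D -> ~ distinguishes_ends V adj r1 r2 C D.
Proof.
  intros Hnest HinN mono R1 R2 Cl1 Cl2 HCD [O1 O2].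
  pose proof (closure_not_inside V adj adj_sym _ C D r1 R1 Cl1 O1) as nC.
  pose proof (closure_not_inside V adj adj_sym _ D C r2 R2 Cl2 O2) as nD.
  destruct (union_one_side V As C D mono) as [HC|HD].
  - intros i. apply (nested_small_side V N (As i) (Bs i) C D
      (fun v => (exists i, As i v) /\ (forall i, Bs i v)) Hnest (HinN i) HCD); auto.
    intros v [_ Bv]. apply Bv.
  - apply nC. intros v [Av _]. apply HC, Av.
  - apply nD. intros v [Av _]. apply HD, Av.
Qed.

Theorem mainTheorem18
  (V : Type) (adj : V -> V -> Prop)
  (adj_sym : forall u v, adj u v -> adj v u)
  (adj_irrefl : forall v, ~ adj v v)
  (Gconn : connected_graph V adj)
  (Glf : locally_finite V adj)
  (N : (V -> Prop) -> (V -> Prop) -> Prop)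
  (N_seps : forall A B, N A B -> is_sep V adj A B)
  (N_nested : nested V N)
  (As Bs : nat -> V -> Prop)
  (seq_in_N : forall i, in_sepset V N (As i) (Bs i))
  (seq_incr : forall i j, i < j -> sep_lt V (As i) (Bs i) (As j) (Bs j))
  (seq_tight : forall i, tight_sep V adj (As i) (Bs i))
  (nonexh : exists v, forall i, Bs i v)
  (N_dist : forall r1 r2,
      is_ray V adj r1 -> is_ray V adj r2 ->
      end_in_closure V adj r1 (fun v => (exists i, As i v) /\ (forall i, Bs i v)) ->
      end_in_closure V adj r2 (fun v => (exists i, As i v) /\ (forall i, Bs i v)) ->
      (exists C D, distinguishes_ends V adj r1 r2 C D) ->
      exists C D, in_sepset V N C D /\ distinguishes_ends V adj r1 r2 C D) :
  exists r, is_ray V adj r /\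
    end_in_closure V adj r (fun v => (exists i, As i v) /\ (forall i, Bs i v)) /\
    forall r', is_ray V adj r' ->
      end_in_closure V adj r' (fun v => (exists i, As i v) /\ (forall i, Bs i v)) ->
      ray_equiv V adj r' r.
Proof.
  (* Existence: the limit separator is infinite, so it has a comb. *)
  pose proof (lim_sep_infinite V adj adj_sym Gconn Glf As Bs seq_incr seq_tight nonexh) as Uinf.
  destruct (comb_exists V adj Gconn Glf _ Uinf) as [s [Rs Cs]].
  assert (Cls : end_in_closure V adj s (lim_sep V As Bs))
    by (exists s; split; [|split]; auto; apply ray_equiv_refl; auto).
  exists s; split; [exact Rs|split; [exact Cls|]].
  (* Uniqueness: a second end would be distinguished by a separation of [N]. *)
  intros r' Rr' Cr'. apply NNPP; intro Hne.
  destruct (N_dist r' s Rr' Rs Cr' Cls (nonequiv_sep V adj adj_sym r' s Rr' Rs Hne))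
    as [C [D [HCD Hdist]]].
  assert (mono : forall i j, i <= j -> forall v, As i v -> As j v)
    by (intros i j Hij; apply (proj1 (seq_mono _ _ _ seq_incr i j Hij))).
  exact (closure_ends_not_distinguished V adj adj_sym N As Bs r' s C D
           N_nested seq_in_N mono Rr' Rs Cr' Cls HCD Hdist).
Qed.
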